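(* Let $G$ be a finite simple graph with $n$ vertices and $m$ edges. If $G$ is H--cordial, then $m-n$ is even.
   Context: A labeling of a graph $G$ is a map $f:E(G)\to\{-1,+1\}$. Given a labeling $f$, for each vertex $v$ define $f(v)=\sum_{e\in I(v)} f(e)$, where $I(v)$ is the set of edges incident to $v$. For an integer $c$, $e_f(c)$ denotes the number of edges $e$ with $f(e)=c$, and $v_f(c)$ denotes the number of vertices $v$ with $f(v)=c$. A labeling $f$ is H--cordial if there is a positive constant $K$ such that $|f(v)|=K$ for every vertex $v$, and $|e_f(1)-e_f(-1)|\le 1$ and $|v_f(K)-v_f(-K)|\le 1$. A graph is H--cordial if it admits an H--cordial labeling. *)

From mathcomp Require Import all_boot all_order all_algebra.
Set Implicit Arguments. Unset Strict Implicit. Unset Printing Implicit Defensive.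
Import Order.TTheory GRing.Theory Num.Theory.
Local Open Scope ring_scope.

Definition simple_graph (T : finType) (e : rel T) : Prop :=
  symmetric e /\ irreflexive e.

Definition edges (T : finType) (e : rel T) : {set {set T}} :=
  [set E : {set T} | [exists x, exists y, e x y && (E == [set x; y])]].

(* A labeling assigns +1 or -1 to every edge (values off edges irrelevant). *)
Definition is_labeling (T : finType) (e : rel T) (f : {set T} -> int) : Prop :=
  forall E, E \in edges e -> f E = 1 \/ f E = -1.

Definition vlabel (T : finType) (e : rel T) (f : {set T} -> int) (v : T) : int :=
  \sum_(E in edges e | v \in E) f E.

Definition e_count (T : finType) (e : rel T) (f : {set T} -> int) (c : int) : nat :=
  #|[set E in edges e | f E == c]|.

Definition v_count (T : finType) (e : rel T) (f : {set T} -> int) (c : int) : nat :=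
  #|[set v : T | vlabel e f v == c]|.

Definition H_cordial_labeling (T : finType) (e : rel T) (f : {set T} -> int) : Prop :=
  is_labeling e f /\
  exists K : int, 0 < K /\
    (forall v : T, `|vlabel e f v| = K) /\
    `|(e_count e f 1)%:Z - (e_count e f (-1))%:Z| <= 1 /\
    `|(v_count e f K)%:Z - (v_count e f (- K))%:Z| <= 1.

Definition H_cordial (T : finType) (e : rel T) : Prop :=
  exists f : {set T} -> int, H_cordial_labeling e f.

(* Summing the vertex labels counts every edge label twice, so
   2 (e_f(1) - e_f(-1)) = K (v_f(K) - v_f(-K)).  If v_f(K) = v_f(-K), then also
   e_f(1) = e_f(-1) and both m and n are even.  Otherwise v_f(K) - v_f(-K) = ±1,
   so K = 2 |e_f(1) - e_f(-1)| forces K = 2 and e_f(1) - e_f(-1) = ±1: both m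
   and n are odd. *)
From mathcomp Require Import all_boot all_algebra zify.
Set Implicit Arguments.
Unset Strict Implicit.
Unset Printing Implicit Defensive.

Import GRing.Theory Num.Theory.
Local Open Scope ring_scope.

Section SignValued.

Variables (I : finType) (A : {set I}) (g : I -> int) (c : int).
Hypothesis c_neq0 : c != 0.
Hypothesis g_sign : forall i, i \in A -> g i = c \/ g i = - c.

Let c_neq_Nc : (c == - c) = false.
Proof. by apply/eqP; lia. Qed.

Let sign_neq_c i : i \in A -> (g i != c) = (g i == - c).
Proof. by case/g_sign=> ->; rewrite eqxx ?c_neq_Nc // eq_sym c_neq_Nc. Qed.

Lemma card_sign_split :
  #|A| = (#|[set i in A | g i == c]| + #|[set i in A | g i == - c]|)%N.
Proof.
rewrite -(cardsID [set i in A | g i == c] A); congr (_ + _)%N; apply: eq_card => i.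
  by rewrite !inE andbA andbb.
rewrite !inE andbC; case Ai: (i \in A) => //=; exact: sign_neq_c.
Qed.

Lemma sum_sign_split :
  \sum_(i in A) g i =
  c * (#|[set i in A | g i == c]|%:Z - #|[set i in A | g i == - c]|%:Z).
Proof.
rewrite (bigID (fun i => g i == c)) /= (eq_bigr (fun=> c)); last by move=> i /andP[_ /eqP].
rewrite [X in _ + X](eq_bigr (fun=> - c)); last first.
  by move=> i /andP[Ai]; rewrite sign_neq_c // => /eqP.
rewrite !sumr_const -(mulr_natr c) -(mulr_natr (- c)) !natz mulrBr mulNr.
congr (c * Posz _ - c * Posz _).
  by apply: eq_card => i; rewrite !inE.
by apply: eq_card => i; rewrite unfold_in !inE; apply: andb_id2l; apply: sign_neq_c.
Qed.

End SignValued.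

Lemma sum_vlabel (T : finType) (e : rel T) (f : {set T} -> int) :
  irreflexive e -> \sum_v vlabel e f v = 2 * \sum_(E in edges e) f E.
Proof.
move=> e_irr; rewrite /vlabel.
under eq_bigr => v _ do rewrite big_mkcondr /=.
rewrite exchange_big /= mulr_sumr; apply: eq_bigr => E.
rewrite inE => /existsP[x /existsP[y /andP[exy /eqP ->]]].
have x_neq_y : x != y by apply: contraTneq exy => ->; rewrite e_irr.
by rewrite -big_mkcond /= sumr_const cards2 x_neq_y mulr_natl.
Qed.

Lemma balanced_counts_parity (a b c d : nat) (K : int) :
  0 < K -> `|a%:Z - b%:Z| <= 1 -> `|c%:Z - d%:Z| <= 1 ->
  2 * (a%:Z - b%:Z) = K * (c%:Z - d%:Z) ->
  (2 %| (a + b)%N%:Z - (c + d)%N%:Z)%Z.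
Proof.
move=> K_gt0 ab_le1 cd_le1.
have [cd|[cd|cd]] : c%:Z - d%:Z = -1 \/ c%:Z - d%:Z = 0 \/ c%:Z - d%:Z = 1 by lia.
all: rewrite cd ?mulrN1 ?mulr0 ?mulr1; lia.
Qed.

Theorem lemma2 (T : finType) (e : rel T) :
  simple_graph e -> H_cordial e ->
  (2 %| (#|edges e|%:Z - #|T|%:Z))%Z.
Proof.
move=> [_ e_irr] [f [f_lab [K [K_gt0 [vlabel_norm [e_bal v_bal]]]]]].
have K_neq0 : K != 0 := lt0r_neq0 K_gt0.
have vlabel_sign v : v \in [set: T] -> vlabel e f v = K \/ vlabel e f v = - K.
  by move=> _; move/eqP: (vlabel_norm v); rewrite eqr_norml => /andP[/orP[]/eqP]; auto.
have v_countE c : v_count e f c = #|[set v in [set: T] | vlabel e f v == c]|.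
  by apply: eq_card => v; rewrite !inE.
have sum_vlabelE := sum_sign_split K_neq0 vlabel_sign.
have sum_flabelE := sum_sign_split (oner_neq0 _) f_lab.
rewrite mul1r in sum_flabelE; rewrite -!v_countE in sum_vlabelE.
rewrite (card_sign_split (oner_neq0 _) f_lab) -cardsT (card_sign_split K_neq0 vlabel_sign).
rewrite -!v_countE; apply: (balanced_counts_parity K_gt0 e_bal v_bal).
by rewrite /e_count -sum_flabelE -sum_vlabelE -(sum_vlabel f e_irr) (eq_bigl _ _ (@in_setT T)).
Qed.
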